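(* Consider the quantized sensor-network model described in the context, and fix $p\in\{1,\dots,P\}$. If the dimension $D_p$ of the attack parameter $\boldsymbol{\tau}^{(p)}$ satisfies $$D_p>\sum_{j\in\mathcal{A}_p}K_j\,(R_j-1),$$ then the matrix $\mathbf{J}_{\boldsymbol{\tau}^{(p)}}$ is singular, and moreover the Fisher information matrix $\mathbf{J}_{\boldsymbol{\Theta}}$ is also singular.
   Context: Sensors are indexed by $j\in\{1,\dots,N\}$. Sensor $j$ acquires $K_j$ scalar measurements $\tilde x_{jk}$, $k=1,\dots,K_j$, each quantized by an $R_j$-level quantizer with fixed disjoint regions $I_j^{(1)},\dots,I_j^{(R_j)}$ partitioning $\mathbb{R}$, producing $\tilde u_{jk}=\sum_{r=1}^{R_j} r\,\mathbb{1}\{\tilde x_{jk}\in I_j^{(r)}\}$. The sensor set is partitioned into disjoint sets $\mathcal{A}_0$ (unattacked sensors) and $\mathcal{A}_1,\dots,\mathcal{A}_P$ (attacked sensors, grouped by attack). There is an unknown deterministic parameter $\boldsymbol{\theta}\in\mathbb{R}^{D_{\boldsymbol\theta}}$ and unknown deterministic attack parameters $\boldsymbol{\tau}^{(p)}\in\mathbb{R}^{D_p}$, $p=1,\dots,P$. The measurements $\{\tilde x_{jk}\}$ are independent; $\tilde x_{jk}$ has pdf $f_{jk}(\cdot\mid\boldsymbol\theta)$ if $j\in\mathcal{A}_0$ and pdf $g_{jk}(\cdot\mid\boldsymbol\theta,\boldsymbol\tau^{(p)})$ if $j\in\mathcal{A}_p$, $p\ge1$. Let $p_{jr}^{(k)}=\Pr(\tilde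 u_{jk}=r)$, i.e. $p_{jr}^{(k)}=\int_{I_j^{(r)}}f_{jk}(x\mid\boldsymbol\theta)\,dx$ for $j\in\mathcal{A}_0$ and $p_{jr}^{(k)}=\int_{I_j^{(r)}}g_{jk}(x\mid\boldsymbol\theta,\boldsymbol\tau^{(p)})\,dx$ for $j\in\mathcal{A}_p$; these are assumed positive and differentiable in the parameters. Let $\boldsymbol\Theta=[\boldsymbol\theta^T,(\boldsymbol\tau^{(1)})^T,\dots,(\boldsymbol\tau^{(P)})^T]^T$. The Fisher information matrix of the quantized data $\{\tilde u_{jk}\}$ for $\boldsymbol\Theta$ is $\mathbf{J}_{\boldsymbol\Theta}=\sum_{j=1}^N\sum_{k=1}^{K_j}\sum_{r=1}^{R_j}\frac{1}{p_{jr}^{(k)}}\frac{\partial p_{jr}^{(k)}}{\partial\boldsymbol\Theta}\Big[\frac{\partial p_{jr}^{(k)}}{\partial\boldsymbol\Theta}\Big]^T$. For $p\ge1$, $\mathbf{J}_{\boldsymbol\tau^{(p)}}=\sum_{j\in\mathcal{A}_p}\sum_{k=1}^{K_j}\sum_{r=1}^{R_j}\frac{1}{p_{jr}^{(k)}}\frac{\partial p_{jr}^{(k)}}{\partial\boldsymbol\tau^{(p)}}\Big[\frac{\partial p_{jr}^{(k)}}{\partial\boldsymbol\tau^{(p)}}\Big]^T\in\mathbb{R}^{D_p\times D_p}$ (the diagonal block of $\mathbf{J}_{\boldsymbol\Theta}$ corresponding to $\boldsymbol\tau^{(p)}$). *)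

From HB Require Import structures.
From mathcomp Require Import all_boot all_order all_algebra.
From mathcomp Require Import all_classical all_reals all_analysis.
Set Implicit Arguments. Unset Strict Implicit. Unset Printing Implicit Defensive.
Import Order.TTheory GRing.Theory Num.Theory.
Import numFieldNormedType.Exports.
Local Open Scope classical_set_scope.
Local Open Scope ring_scope.

Section Defs.
Variable R : realType.

Definition cellprob (A : set R) (h : R -> R) : R :=
  fine (\int[@lebesgue_measure R]_(x in A) (h x)%:E)%E.

Definition is_pdf (h : R -> R) : Prop :=
  (forall x, 0 <= h x) /\ measurable_fun setT h /\
  (\int[@lebesgue_measure R]_x (h x)%:E = 1)%E.

Definition grad n (F : 'rV[R]_n -> R) (a : 'rV[R]_n) : 'cV[R]_n :=
  \col_(i < n) ('D_(delta_mx 0 i) F a).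

(* Full parameter Theta = [theta, tau^(1), ..., tau^(P)] as a row vector *)
Definition theta_of Dth P (D : 'I_P -> nat)
  (Th : 'rV[R]_(Dth + \sum_(p < P) D p)) : 'rV[R]_Dth := lsubmx Th.
Definition tau_of Dth P (D : 'I_P -> nat)
  (Th : 'rV[R]_(Dth + \sum_(p < P) D p)) (p : 'I_P) : 'rV[R]_(D p) :=
  submxrow (rsubmx Th) p.

(* Sensors 'I_N; sensor j makes K j measurements, quantizer with Rq j levels
   (levels indexed by 'I_(Rq j), i.e. r-1); regions Ireg j r.
   grp j = None  <-> j in A_0 ; grp j = Some p <-> j in A_p.
   f j k x theta : pdf of x_{jk} for unattacked j;
   g j k p x theta tau : pdf of x_{jk} for j in A_p. *)
Definition pQ N (K Rq : 'I_N -> nat) Dth P (D : 'I_P -> nat)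
  (grp : 'I_N -> option 'I_P)
  (Ireg : forall j, 'I_(Rq j) -> set R)
  (f : forall j, 'I_(K j) -> R -> 'rV[R]_Dth -> R)
  (g : forall j, 'I_(K j) -> forall p : 'I_P, R -> 'rV[R]_Dth -> 'rV[R]_(D p) -> R)
  (j : 'I_N) (k : 'I_(K j)) (r : 'I_(Rq j))
  (Th : 'rV[R]_(Dth + \sum_(p < P) D p)) : R :=
  match grp j with
  | None => cellprob (Ireg j r) (fun x => f j k x (theta_of Th))
  | Some p => cellprob (Ireg j r) (fun x => g j k p x (theta_of Th) (tau_of Th p))
  end.

Definition J_Theta N (K Rq : 'I_N -> nat) Dth P (D : 'I_P -> nat)
  grp Ireg f g (Th : 'rV[R]_(Dth + \sum_(p < P) D p))
  : 'M[R]_(Dth + \sum_(p < P) D p) :=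
  \sum_(j < N) \sum_(k < K j) \sum_(r < Rq j)
    (@pQ N K Rq Dth P D grp Ireg f g j k r Th)^-1 *:
      (grad (@pQ N K Rq Dth P D grp Ireg f g j k r) Th *m
       (grad (@pQ N K Rq Dth P D grp Ireg f g j k r) Th)^T).

Definition J_tau N (K Rq : 'I_N -> nat) Dth P (D : 'I_P -> nat)
  (grp : 'I_N -> option 'I_P) Ireg f g (p : 'I_P)
  (Th : 'rV[R]_(Dth + \sum_(p < P) D p)) : 'M[R]_(D p) :=
  \sum_(j < N | grp j == Some p) \sum_(k < K j) \sum_(r < Rq j)
    let gt := grad (fun t : 'rV[R]_(D p) =>
                 cellprob (Ireg j r) (fun x => g j k p x (theta_of Th) t))
               (tau_of Th p) in
    (@pQ N K Rq Dth P D grp Ireg f g j k r Th)^-1 *: (gt *m gt^T).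

End Defs.

From HB Require Import structures.
From mathcomp Require Import all_boot all_order all_algebra.
From mathcomp Require Import all_classical all_reals all_analysis.
From mathcomp Require Import measurable_realfun.
Import Order.TTheory GRing.Theory Num.Theory.
Import numFieldNormedType.Exports.
Local Open Scope classical_set_scope.
Local Open Scope ring_scope.

(** The probabilities of the [R_j] cells of one measurement sum to one, so
    their gradients sum to zero and, for each of the [K_j] measurements of an
    attacked sensor [j], the [R_j] gradients with respect to [tau^(p)] span a
    space of dimension at most [R_j - 1].  Under the dimension hypothesis all
    these gradients therefore lie in a proper subspace of [R^(D_p)], and a
    nonzero vector [v] orthogonal to it lies in the kernel of every rank-one
    term of [J_tau^(p)].  Padding [v] with zeros outside the [tau^(p)] block
    gives a kernel vector of [J_Theta]: the cell probabilities of the other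
    sensors do not depend on [tau^(p)] at all. *)

Lemma sum_cellprob_partition (R : realType) n (A : 'I_n -> set R) (h : R -> R) :
  (forall r, measurable (A r)) ->
  (forall r s, r != s -> A r `&` A s = set0) ->
  (forall x, exists r, A r x) -> is_pdf h ->
  \sum_(r < n) cellprob (A r) h = 1.
Proof.
move=> mA dA cA [h0 [mh h1]].
have mhE : measurable_fun [set: R] (EFin \o h) by exact/measurable_EFinP.
have cupA : \big[setU/set0]_(r <- index_enum 'I_n) A r = setT.
  apply/seteqP; split => // x _; have [r Ar] := cA x.
  by rewrite -bigcup_seq; exists r => //=; rewrite mem_index_enum.
have trivA : trivIset [set` index_enum 'I_n] A.
  move=> r s _ _ [x [Ar As]]; apply/eqP; apply: contraT => rs.
  by have := dA _ _ rs; rewrite -subset0 => /(_ x (conj Ar As)).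
have finA r : (\int[@lebesgue_measure R]_(x in A r) (h x)%:E)%E \is a fin_num.
  rewrite ge0_fin_numE; last by apply: integral_ge0 => x _; rewrite lee_fin.
  apply: (le_lt_trans (@ge0_subset_integral _ _ _ (@lebesgue_measure R) _ _
                        (mA r) measurableT _ mhE _ _)).
  - by move=> x _; rewrite lee_fin.
  - by [].
  - by rewrite h1 ltry.
rewrite /cellprob sum_fine; last by move=> r _; apply: finA.
rewrite -ge0_integral_bigsetU ?index_enum_uniq ?cupA ?h1 //.
by move=> x _; rewrite lee_fin.
Qed.

Lemma derive_along_lineE (R : numFieldType) (V V' W : normedModType R)
    (f : V -> W) (g : V' -> W) a b v w :
  (forall h : R, f (h *: v + a) = g (h *: w + b)) -> 'D_v f a = 'D_w g b.
Proof.
move=> fg; have fgab : f a = g b by have := fg 0; rewrite !scale0r !add0r.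
rewrite /derive fgab.
suff -> : (fun h : R => h^-1 *: ((f \o shift a) (h *: v) - g b)) =
          (fun h : R => h^-1 *: ((g \o shift b) (h *: w) - g b)) by [].
by apply: funext => h /=; rewrite /shift /= fg.
Qed.

Section Gradient.
Variables (R : realType) (n : nat).

Lemma grad_cst (c : R) (a : 'rV[R]_n) : grad (cst c) a = 0.
Proof. by apply/matrixP => i j; rewrite !mxE derive_cst. Qed.

Lemma grad_sum m (F : 'I_m -> 'rV[R]_n -> R) (a : 'rV[R]_n) :
  (forall r, differentiable (F r) a) ->
  grad (\sum_(r < m) F r) a = \sum_(r < m) grad (F r) a.
Proof.
move=> dF; apply/matrixP => i j; rewrite summxE !mxE derive_sum.
  by apply: eq_bigr => r _; rewrite mxE.
by move=> r; apply: diff_derivable.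
Qed.

End Gradient.

Section RankArgument.
Context {F : fieldType}.

Lemma mxrank_sum_row_eq0 m n (U : 'M[F]_(m, n)) :
  \sum_(r < m) row r U = 0 -> (\rank U <= m - 1)%N.
Proof.
move=> sumU0; case: (posnP m) => [m0|m_gt0].
  by rewrite (leq_trans (rank_leq_row U)) // m0.
pose x : 'rV[F]_m := const_mx 1.
have x_neq0 : x != 0.
  by apply/eqP => /rowP /(_ (Ordinal m_gt0)); rewrite !mxE => /eqP; rewrite oner_eq0.
have xU0 : x *m U = 0.
  by rewrite mulmx_sum_row -[RHS]sumU0; apply: eq_bigr => r _; rewrite mxE scale1r.
have := mxrankS (introT sub_kermxP xU0); rewrite mxrank_ker rank_rV x_neq0.
by rewrite subn_gt0 => ltUm; rewrite leq_subRL ?add1n.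
Qed.

Lemma mxrank_sumsmx_le {I : finType} (P : pred I) {n} (A : I -> 'M[F]_n) :
  (\rank (\sum_(i | P i) A i) <= \sum_(i | P i) \rank (A i))%N.
Proof. exact: mxrank_sum_leqif. Qed.

Lemma exists_right_kernel {m n} {A : 'M[F]_(m, n)} :
  (\rank A < n)%N -> exists2 v : 'cV[F]_n, v != 0 & A *m v = 0.
Proof.
move=> rkA; have : cokermx A != 0.
  by rewrite -mxrank_eq0 mxrank_coker subn_eq0 -ltnNge.
case/matrix0Pn => i [c cokerA_ic]; exists (col c (cokermx A)).
  by apply/matrix0Pn; exists i, 0; rewrite mxE.
by rewrite colE mulmxA mulmx_coker mul0mx.
Qed.

Lemma right_kernel_not_unitmx {n} {A : 'M[F]_n} {v : 'cV[F]_n} :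
  v != 0 -> A *m v = 0 -> A \notin unitmx.
Proof.
move=> v_neq0 Av0; apply/negP => uA.
by move: v_neq0; rewrite -(mulKmx uA v) Av0 mulmx0 eqxx.
Qed.

End RankArgument.

Section TauBlock.
Context {R : realType} {Dth P : nat} {D : 'I_P -> nat}.
Local Notation Dim := (Dth + \sum_(q < P) D q)%N.

Definition tau_index {p : 'I_P} (i : 'I_(D p)) : 'I_Dim :=
  rshift Dth (tagnat.Rank p i).

Lemma tau_ofE (X : 'rV[R]_Dim) (p : 'I_P) a i :
  tau_of X p a i = X a (tau_index i).
Proof. by rewrite !mxE. Qed.

Lemma eq_tau_index (p q : 'I_P) (i : 'I_(D p)) (l : 'I_(D q)) :
  (tau_index l == tau_index i) = (q == p) && (l == i :> nat).
Proof. by rewrite /tau_index eq_rshift -val_eqE tagnat.eq_Rank. Qed.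

Variables (p : 'I_P) (i : 'I_(D p)) (h : R) (X : 'rV[R]_Dim).

Lemma theta_of_shift_tau : theta_of (h *: delta_mx 0 (tau_index i) + X) = theta_of X.
Proof. by apply/rowP => a; rewrite !mxE eq_lrshift andbF mulr0 add0r. Qed.

Lemma tau_of_shift_tau :
  tau_of (h *: delta_mx 0 (tau_index i) + X) p = h *: delta_mx 0 i + tau_of X p.
Proof.
by apply/rowP => l; rewrite !tau_ofE !mxE eq_tau_index !eqxx.
Qed.

Lemma tau_of_shift_tau_neq q : q != p ->
  tau_of (h *: delta_mx 0 (tau_index i) + X) q = tau_of X q.
Proof.
by move=> qp; apply/rowP => l; rewrite !tau_ofE !mxE eq_tau_index (negbTE qp) mulr0 add0r.
Qed.

End TauBlock.

Section TauEmbedding.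
Context {R : realType} {Dth P : nat} {D : 'I_P -> nat} {p : 'I_P}.
Local Notation Dim := (Dth + \sum_(q < P) D q)%N.

Definition embed_tau (v : 'cV[R]_(D p)) : 'cV[R]_Dim :=
  \sum_(i < D p) v i 0 *: delta_mx (tau_index i) 0.

Lemma mulmx_embed_tau (x : 'rV[R]_Dim) v : x *m embed_tau v = tau_of x p *m v.
Proof.
rewrite mulmx_sumr; apply/rowP => a; rewrite (ord1 a) summxE !mxE.
by apply: eq_bigr => i _; rewrite -scalemxAr -colE !mxE mulrC.
Qed.

Lemma embed_tauE (v : 'cV[R]_(D p)) i : embed_tau v (tau_index i) 0 = v i 0.
Proof.
rewrite summxE (bigD1 i) //= [X in _ + X]big1 => [|l li]; rewrite !mxE.
  by rewrite eqxx mulr1 addr0.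
by rewrite eq_tau_index eqxx val_eqE eq_sym (negbTE li) mulr0.
Qed.

Lemma embed_tau_neq0 {v : 'cV[R]_(D p)} : v != 0 -> embed_tau v != 0.
Proof.
case/matrix0Pn => i [a]; rewrite (ord1 a) -embed_tauE => vi.
by apply/matrix0Pn; exists (tau_index i), 0.
Qed.

End TauEmbedding.

Section QuantizedFisher.
Context {R : realType} {N : nat} {K Rq : 'I_N -> nat} {Dth P : nat}.
Context {D : 'I_P -> nat} {grp : 'I_N -> option 'I_P}.
Context {Ireg : forall j, 'I_(Rq j) -> set R}.
Context {f : forall j, 'I_(K j) -> R -> 'rV[R]_Dth -> R}.
Context {g : forall j, 'I_(K j) -> forall p : 'I_P,
               R -> 'rV[R]_Dth -> 'rV[R]_(D p) -> R}.
Local Notation Dim := (Dth + \sum_(q < P) D q)%N.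
Local Notation pq j := (@pQ R N K Rq Dth P D grp Ireg f g j).

Hypothesis hmeas : forall j r, measurable (Ireg j r).
Hypothesis hdisj : forall j (r s : 'I_(Rq j)), r != s -> Ireg j r `&` Ireg j s = set0.
Hypothesis hcover : forall j (x : R), exists r, Ireg j r x.
Hypothesis hf : forall j k th, grp j = None -> is_pdf (fun x => f j k x th).
Hypothesis hg : forall j k p th t, grp j = Some p -> is_pdf (fun x => g j k p x th t).
Hypothesis hdiff : forall j k r Th, differentiable (pq j k r) Th.

Lemma sum_pQ j k (Th : 'rV[R]_Dim) : \sum_(r < Rq j) pq j k r Th = 1.
Proof.
rewrite /pQ; case: (grp j) (@hf j k) (@hg j k) => [q _ hgq|hfj _].
- by apply: sum_cellprob_partition => //; [exact: hdisj | exact: hgq].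
- by apply: sum_cellprob_partition => //; [exact: hdisj | exact: hfj].
Qed.

Lemma sum_grad_pQ j k (Th : 'rV[R]_Dim) : \sum_(r < Rq j) grad (pq j k r) Th = 0.
Proof.
rewrite -grad_sum // (_ : \sum_(r < Rq j) pq j k r = cst 1) ?grad_cst //.
by rewrite fct_sumE; apply/funext => X; rewrite sum_pQ.
Qed.

Context {Th : 'rV[R]_Dim} {p : 'I_P}.
Local Notation tau_grad j k r := (tau_of (grad (pq j k r) Th)^T p).

Lemma tau_grad_pQ_unattacked j k r : grp j != Some p -> tau_grad j k r = 0.
Proof.
move=> jNp; apply/rowP => i; rewrite tau_ofE !mxE.
rewrite (@derive_along_lineE _ _ _ _ _ (cst (pq j k r Th)) _ Th _ 0) ?derive_cst //.
move=> h; rewrite /pQ theta_of_shift_tau; case: (grp j) jNp => [q qNp|//].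
by rewrite tau_of_shift_tau_neq //; apply: contraNneq qNp => ->.
Qed.

Lemma tau_grad_pQ_attacked j k r : grp j = Some p ->
  tau_grad j k r =
  (grad (fun t => cellprob (Ireg j r) (fun x => g j k p x (theta_of Th) t))
        (tau_of Th p))^T.
Proof.
move=> jp; apply/rowP => i; rewrite tau_ofE !mxE; apply: derive_along_lineE => h.
by rewrite /pQ jp theta_of_shift_tau tau_of_shift_tau.
Qed.

Lemma mxrank_tau_grad_pQ j k :
  (\rank (\matrix_(r < Rq j) tau_grad j k r) <= Rq j - 1)%N.
Proof.
apply: mxrank_sum_row_eq0; apply/rowP => i; rewrite summxE.
under eq_bigr => r _ do rewrite rowK tau_ofE mxE.
by rewrite -summxE sum_grad_pQ !mxE.
Qed.

Lemma exists_tau_null_direction :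
  (\sum_(j < N | grp j == Some p) K j * (Rq j - 1) < D p)%N ->
  exists2 v : 'cV[R]_(D p), v != 0 & forall j k r, tau_grad j k r *m v = 0.
Proof.
move=> dim_gt.
pose U j k := \matrix_(r < Rq j) tau_grad j k r.
pose S := (\sum_(j < N | grp j == Some p) \sum_(k < K j) <<U j k>>)%MS.
have rkS : (\rank S < D p)%N.
  rewrite /S; apply: leq_ltn_trans dim_gt; apply: leq_trans (mxrank_sumsmx_le _ _) _.
  apply: leq_sum => j _; apply: leq_trans (mxrank_sumsmx_le _ _) _.
  rewrite -[in leqRHS](card_ord (K j)) -sum_nat_const.
  by apply: leq_sum => k _; rewrite mxrank_gen mxrank_tau_grad_pQ.
have [v v_neq0 Sv0] := exists_right_kernel rkS.
exists v => // j k r; have [jp|jNp] := eqVneq (grp j) (Some p); last first.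
  by rewrite tau_grad_pQ_unattacked // mul0mx.
have UjkS : (U j k <= S)%MS.
  by apply: (sumsmx_sup j); rewrite ?jp //; apply: (sumsmx_sup k); rewrite ?genmxE.
have Ujkv0 : U j k *m v = 0.
  by apply/eqP; rewrite -submx0 (submx_trans (submxMr v UjkS)) // Sv0 sub0mx.
by move: (congr1 (row r) Ujkv0); rewrite row_mul rowK row0.
Qed.

Lemma J_tau_mulmx_eq0 {v : 'cV[R]_(D p)} :
  (forall j k r, tau_grad j k r *m v = 0) ->
  @J_tau R N K Rq Dth P D grp Ireg f g p Th *m v = 0.
Proof.
move=> tau_grad_v0; rewrite /J_tau mulmx_suml; apply: big1 => j /eqP jp.
rewrite mulmx_suml; apply: big1 => k _; rewrite mulmx_suml; apply: big1 => r _ /=.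
by rewrite -scalemxAl -mulmxA -tau_grad_pQ_attacked // tau_grad_v0 mulmx0 scaler0.
Qed.

Lemma J_Theta_mulmx_embed_tau {v : 'cV[R]_(D p)} :
  (forall j k r, tau_grad j k r *m v = 0) ->
  @J_Theta R N K Rq Dth P D grp Ireg f g Th *m embed_tau v = 0.
Proof.
move=> tau_grad_v0; rewrite /J_Theta mulmx_suml; apply: big1 => j _.
rewrite mulmx_suml; apply: big1 => k _; rewrite mulmx_suml; apply: big1 => r _ /=.
by rewrite -scalemxAl -mulmxA mulmx_embed_tau tau_grad_v0 mulmx0 scaler0.
Qed.

End QuantizedFisher.

Theorem theorem1 (R : realType) (N : nat) (K Rq : 'I_N -> nat)
  (Dth P : nat) (D : 'I_P -> nat) (grp : 'I_N -> option 'I_P)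
  (Ireg : forall j, 'I_(Rq j) -> set R)
  (f : forall j, 'I_(K j) -> R -> 'rV[R]_Dth -> R)
  (g : forall j, 'I_(K j) -> forall p : 'I_P, R -> 'rV[R]_Dth -> 'rV[R]_(D p) -> R)
  (* quantizer regions: measurable, pairwise disjoint, covering R *)
  (hmeas : forall j r, measurable (Ireg j r))
  (hdisj : forall j (r s : 'I_(Rq j)), r != s -> Ireg j r `&` Ireg j s = set0)
  (hcover : forall j (x : R), exists r, Ireg j r x)
  (* the measurement densities are pdfs *)
  (hf : forall j k th, grp j = None -> is_pdf (fun x => f j k x th))
  (hg : forall j k p th t, grp j = Some p -> is_pdf (fun x => g j k p x th t))
  (* cell probabilities positive and differentiable in the parameters *)
  (hpos : forall j k r Th, 0 < @pQ R N K Rq Dth P D grp Ireg f g j k r Th)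
  (hdiff : forall j k r Th,
     differentiable (@pQ R N K Rq Dth P D grp Ireg f g j k r) Th)
  (Th : 'rV[R]_(Dth + \sum_(p < P) D p)) (p : 'I_P) :
  (\sum_(j < N | grp j == Some p) K j * (Rq j - 1) < D p)%N ->
  (@J_tau R N K Rq Dth P D grp Ireg f g p Th) \notin unitmx /\
  (@J_Theta R N K Rq Dth P D grp Ireg f g Th) \notin unitmx.
Proof.
move=> dim_gt.
have [v v_neq0 v_null] :=
  exists_tau_null_direction (Th := Th) hmeas hdisj hcover hf hg hdiff dim_gt.
split.
- exact: right_kernel_not_unitmx v_neq0 (J_tau_mulmx_eq0 v_null).
- exact: right_kernel_not_unitmx (embed_tau_neq0 v_neq0) (J_Theta_mulmx_embed_tau v_null).
Qed.
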